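(* Let $R$ be a commutative Noetherian ring, $M$ a finitely generated $R$-module, $X \subseteq \mathrm{Spec}(R)$ a basic set, and $\mathscr{E}$ an $R$-submodule of $\mathrm{Hom}_R(M,R)$. Let $S = \{x_1,\ldots,x_n\} \subseteq M$ be an $X$-free-basic set for $M$ with respect to $\mathscr{E}$, and let $(a,x_1) \in R \oplus M$ be an $X$-free-basic element for $R \oplus M$ with respect to $R \oplus \mathscr{E}$. Then there exist $a_1,\ldots,a_{n-1} \in R$ such that $S' = \{x_1',\ldots,x_{n-1}'\} = \{x_1 + a a_1 x_n, x_2 + a_2 x_n, \ldots, x_{n-1} + a_{n-1} x_n\}$ is an $X$-free-basic set for $M$ with respect to $\mathscr{E}$, and $(a,x_1')$ is an $X$-free-basic element for $R \oplus M$ with respect to $R \oplus \mathscr{E}$.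
   Context: A subset $X \subseteq \mathrm{Spec}(R)$ is basic if, whenever the intersection of a family of primes in $X$ is a prime ideal, that intersection belongs to $X$. For $\mathfrak{p} \in X$, $\dim_X(\mathfrak{p})$ is the supremum of lengths $n$ of chains $\mathfrak{p} = \mathfrak{p}_0 \subsetneq \cdots \subsetneq \mathfrak{p}_n$ in $X$. $\mathscr{E}_\mathfrak{p}$ is viewed inside $\mathrm{Hom}_{R_\mathfrak{p}}(M_\mathfrak{p},R_\mathfrak{p})$. A free $\mathscr{E}_\mathfrak{p}$-summand of $M_\mathfrak{p}$ is a direct summand $F$ (with complement $G$) of $M_\mathfrak{p}$, $F \cong R_\mathfrak{p}^m$, such that each coordinate of the projection $M_\mathfrak{p} \to F \cong R_\mathfrak{p}^m$ along $G$ lies in $\mathscr{E}_\mathfrak{p}$. With $\langle S\rangle$ the submodule generated by $S$, $\delta^{\mathscr{E}}_\mathfrak{p}(S,M)$ is the largest integer $m \ge 0$ such that there is a free $\mathscr{E}_\mathfrak{p}$-summand of $M_\mathfrak{p}$ of rank $m$ contained in $\langle S\rangle_\mathfrak{p}$. A finite set $S = \{x_1,\ldots,x_n\}$ is $\mathfrak{p}$-free-basic for $M$ with respect to $\mathscr{E}$ if $\delta^{\mathscr{E}}_\mathfrak{p}(S,M) \ge \min\{n, 1+\dim_X(\mathfrak{p})\}$, and $X$-free-basic with respect to $\mathscr{E}$ if this holds for all $\mathfrak{p}\in X$. An element $x$ is $\mathfrak{p}$-free-basic with respect to $\mathscr{E}$ if $(Rx)_\mathfrak{p} \cong R_\mathfrak{p}$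 and the inclusion $(Rx)_\mathfrak{p} \subseteq M_\mathfrak{p}$ splits via an element of $\mathscr{E}_\mathfrak{p}$; $X$-free-basic if this holds for all $\mathfrak{p} \in X$. $R \oplus \mathscr{E}$ is regarded as the $R$-submodule of $\mathrm{Hom}_R(R\oplus M,R)$ consisting of maps $(r,m) \mapsto cr + f(m)$ with $c \in R$, $f \in \mathscr{E}$. *)

(* Localizations are encoded concretely by fractions. *)
From mathcomp Require Import all_boot all_order all_algebra.
Set Implicit Arguments. Unset Strict Implicit. Unset Printing Implicit Defensive.
Import GRing.Theory.
Local Open Scope ring_scope.

Section Defs.
Variable R : comPzRingType.

Definition is_ideal (I : R -> Prop) : Prop :=
  [/\ I 0, (forall a b, I a -> I b -> I (a + b)) & (forall r a, I a -> I (r * a))].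

Definition is_prime_ideal (p : R -> Prop) : Prop :=
  [/\ is_ideal p, ~ p 1 & (forall a b, p (a * b) -> p a \/ p b)].

Definition noetherian : Prop :=
  forall I : R -> Prop, is_ideal I ->
    exists s : seq R, forall r, I r <-> exists c : nat -> R, r = \sum_(i < size s) c i * s`_i.

Definition bigcapI (F : (R -> Prop) -> Prop) : R -> Prop :=
  fun r => forall q, F q -> q r.

Definition basic (X : (R -> Prop) -> Prop) : Prop :=
  (forall q, X q -> is_prime_ideal q) /\
  (forall F : (R -> Prop) -> Prop, (forall q, F q -> X q) ->
     is_prime_ideal (bigcapI F) -> X (bigcapI F)).

Definition chain_in (X : (R -> Prop) -> Prop) (p : R -> Prop) (l : nat) : Prop :=
  exists q : nat -> (R -> Prop),
    [/\ q 0%N = p, (forall i, (i <= l)%N -> X (q i)) &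
        (forall i, (i < l)%N ->
           (forall r, q i r -> q i.+1 r) /\ exists r, q i.+1 r /\ ~ q i r)].

(* equality of fractions a/u = b/v in R_p *)
Definition loc_eq (p : R -> Prop) (a u b v : R) : Prop :=
  exists w, ~ p w /\ w * (a * v - b * u) = 0.

Variable N : lmodType R.

Definition fin_gen : Prop :=
  exists s : seq N, forall m, exists c : nat -> R, m = \sum_(i < size s) c i *: s`_i.

Definition is_R_linear (f : N -> R) : Prop :=
  forall (r : R) (m1 m2 : N), f (r *: m1 + m2) = r * f m1 + f m2.

Definition hom_submodule (E : (N -> R) -> Prop) : Prop :=
  [/\ forall f, E f -> is_R_linear f,
      E (fun _ => 0),
      (forall f g, E f -> E g -> E (fun m => f m + g m)) &
      (forall r f, E f -> E (fun m => r * f m))].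

Definition span_of (n : nat) (x : nat -> N) (m : N) : Prop :=
  exists c : nat -> R, m = \sum_(1 <= i < n.+1) c i *: x i.

(* P_p contains a free E_p-summand of N_p of rank k: there are e_1..e_k in P_p
   (fractions e j / s j) and coordinate forms f_1..f_k in E_p (fractions f i / t i)
   with f_i(e_j) = delta_ij in R_p. *)
Definition has_free_summand (p : R -> Prop) (E : (N -> R) -> Prop)
    (P : N -> Prop) (k : nat) : Prop :=
  exists (e : 'I_k -> N) (s : 'I_k -> R) (f : 'I_k -> N -> R) (t : 'I_k -> R),
    [/\ forall j, P (e j) /\ ~ p (s j),
        forall i, E (f i) /\ ~ p (t i) &
        forall i j, loc_eq p (f i (e j)) (t i * s j) (i == j)%:R 1].

Definition delta_ge (p : R -> Prop) (E : (N -> R) -> Prop)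
    (n : nat) (x : nat -> N) (j : nat) : Prop :=
  exists k, (j <= k)%N /\ has_free_summand p E (span_of n x) k.

(* S = {x_1..x_n} is p-free-basic: delta >= min {n, 1 + dim_X p} *)
Definition pfree_basic_set (X : (R -> Prop) -> Prop) (p : R -> Prop)
    (E : (N -> R) -> Prop) (n : nat) (x : nat -> N) : Prop :=
  forall j, (j <= n)%N -> (j = 0%N \/ chain_in X p j.-1) -> delta_ge p E n x j.

Definition Xfree_basic_set (X : (R -> Prop) -> Prop)
    (E : (N -> R) -> Prop) (n : nat) (x : nat -> N) : Prop :=
  forall p, X p -> pfree_basic_set X p E n x.

(* x is p-free-basic: (Rx)_p = R_p, split by an element of E_p;
   i.e. some f/t in E_p sends x/1 to 1 *)
Definition pfree_basic_elt (p : R -> Prop) (E : (N -> R) -> Prop) (x : N) : Prop :=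
  exists f t, [/\ E f, ~ p t & loc_eq p (f x) t 1 1].

Definition Xfree_basic_elt (X : (R -> Prop) -> Prop) (E : (N -> R) -> Prop) (x : N) :=
  forall p, X p -> pfree_basic_elt p E x.

End Defs.

Definition sumE (R : comPzRingType) (M : lmodType R) (E : (M -> R) -> Prop)
  : ((R^o * M)%type -> R) -> Prop :=
  fun g => exists (c : R) (f : M -> R), E f /\ forall rm, g rm = c * rm.1 + f rm.2.

(* Everything is decided prime by prime through minors: delta_p(S) >= k exactly when some k x k
   determinant [f_i (x_(s j))] with f_i in E lies outside p.  At a prime p of X the bound that
   S' has to satisfy at rank j follows from delta_p(S) >= j + 1 by expanding a minor along its
   x_n column, for any choice of the a_i; this leaves only the critical rank j = 1 + dim_X p.
   There a case analysis on a minor outside p, which uses (a, x_1) once all indices that can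
   absorb a shift are exhausted, shows that any coefficients can be corrected at p by adding
   multiples of an arbitrary element outside p.  The primes critical at some rank are minimal
   elements of closed subsets of X, hence finitely many since R is Noetherian, and a
   prime-avoidance choice over them, from a minimal one down, makes all corrections at once. *)

From mathcomp Require Import all_boot all_order all_algebra zify.
From Stdlib Require Import FunctionalExtensionality PropExtensionality Classical ClassicalEpsilon.
Set Implicit Arguments. Unset Strict Implicit. Unset Printing Implicit Defensive.
Import GRing.Theory.
Local Open Scope ring_scope.

(** * Ideals *)

Section Ideals.
Variable R : comPzRingType.

Section Ideal.
Variable I : R -> Prop.
Hypothesis HI : is_ideal I.

Lemma ideal0 : I 0. Proof. by case: HI. Qed.

Lemma idealD a b : I a -> I b -> I (a + b). Proof. by case: HI => _ + _; apply. Qed.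

Lemma idealMl r a : I a -> I (r * a). Proof. by case: HI => _ _; apply. Qed.

Lemma idealMr r a : I a -> I (a * r). Proof. by rewrite mulrC; apply: idealMl. Qed.

Lemma idealN a : I a -> I (- a). Proof. by rewrite -mulN1r; apply: idealMl. Qed.

Lemma idealDl a b : I a -> I (a + b) <-> I b.
Proof.
by move=> Ia; split=> [|/(idealD Ia)//]; rewrite -{2}(addKr a b); apply: idealD (idealN Ia).
Qed.

Lemma idealDr a b : I b -> I (a + b) <-> I a.
Proof. by rewrite addrC; apply: idealDl. Qed.

Lemma ideal_sum T (r : seq T) (P : pred T) (F : T -> R) :
  (forall i, P i -> I (F i)) -> I (\sum_(i <- r | P i) F i).
Proof. by move=> IF; elim/big_ind: _ => //; [exact: ideal0 | exact: idealD]. Qed.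

End Ideal.

Section PrimeIdeal.
Variable p : R -> Prop.
Hypothesis Hp : is_prime_ideal p.

Lemma prime_ideal_ideal : is_ideal p. Proof. by case: Hp. Qed.

Lemma nprime1 : ~ p 1. Proof. by case: Hp. Qed.

Lemma prime_idealMP a b : p (a * b) -> p a \/ p b. Proof. by case: Hp => _ _; apply. Qed.

Lemma nprimeM a b : ~ p a -> ~ p b -> ~ p (a * b).
Proof. by move=> na nb /prime_idealMP []. Qed.

Lemma nprimeMl a b : ~ p (a * b) -> ~ p a.
Proof. by move=> nab /(idealMr prime_ideal_ideal b). Qed.

Lemma nprimeMr a b : ~ p (a * b) -> ~ p b.
Proof. by move=> nab /(idealMl prime_ideal_ideal a). Qed.

Lemma nprime_prod T (r : seq T) (P : pred T) (F : T -> R) :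
  (forall i, P i -> ~ p (F i)) -> ~ p (\prod_(i <- r | P i) F i).
Proof. by move=> nF; elim/big_ind: _ => //; [exact: nprime1 | exact: nprimeM]. Qed.

Lemma nprime_sign k : ~ p ((-1) ^+ k).
Proof.
elim: k => [|k IHk]; first exact: nprime1.
by rewrite exprS mulN1r => /(idealN prime_ideal_ideal); rewrite opprK.
Qed.

End PrimeIdeal.
End Ideals.

(** * Minors of families of linear forms *)

Section Minors.
Variables (R : comPzRingType) (M : lmodType R).

Definition minor k (f : 'I_k -> M -> R) (v : 'I_k -> M) : R :=
  \det (\matrix_(i, j) f i (v j)).

Definition setcol T k (v : 'I_k -> T) (b0 : 'I_k) (u : T) : 'I_k -> T :=
  fun b => if b == b0 then u else v b.

Lemma setcol_id T k (v : 'I_k -> T) b0 u : v b0 = u -> setcol v b0 u = v.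
Proof.
by move=> <-; apply: functional_extensionality => b; rewrite /setcol; case: eqP => [->|].
Qed.

Lemma setcol_setcol T k (v : 'I_k -> T) b0 u w : setcol (setcol v b0 u) b0 w = setcol v b0 w.
Proof. by apply: functional_extensionality => b; rewrite /setcol; case: eqP. Qed.

Lemma setcol_map T U k (y : T -> U) (s : 'I_k -> T) b0 j :
  setcol (fun b => y (s b)) b0 (y j) = fun b => y (setcol s b0 j b).
Proof. by apply: functional_extensionality => b; rewrite /setcol; case: eqP. Qed.

Lemma setcol_lift T k (v : 'I_k.+1 -> T) b0 u :
  (fun j => setcol v b0 u (lift b0 j)) = fun j => v (lift b0 j).
Proof.
by apply: functional_extensionality => j; rewrite /setcol eq_sym (negPf (neq_lift _ _)).
Qed.

Definition snocf T k (v : 'I_k -> T) (u : T) : 'I_k.+1 -> T :=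
  fun b => if unlift ord_max b is Some j then v j else u.

Lemma snocf_map T U k (y : T -> U) (s : 'I_k -> T) j :
  snocf (fun b => y (s b)) (y j) = fun b => y (snocf s j b).
Proof. by apply: functional_extensionality => b; rewrite /snocf; case: unlift. Qed.

Section FixedForms.
Variables (k : nat) (f : 'I_k -> M -> R).

Lemma minor_eq0 (v : 'I_k -> M) b b' : b != b' -> v b = v b' -> minor f v = 0.
Proof.
move=> neq_bb' eq_v; rewrite /minor -det_tr.
by apply: (determinant_alternate neq_bb') => i; rewrite !mxE eq_v.
Qed.

Lemma minor_cramer (v : 'I_k -> M) a u :
  minor f v * f a u = \sum_b f a (v b) * minor f (setcol v b u).
Proof.
set N := \matrix_(i, j) f i (v j).
have cramer b : minor f (setcol v b u) = \sum_i \adj N b i * f i u.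
  rewrite /minor (expand_det_col _ b); apply: eq_bigr => i _.
  rewrite !mxE /setcol eqxx [RHS]mulrC /cofactor; congr (_ * (_ * \det _)).
  by apply/matrixP => r t; rewrite !mxE eq_sym (negPf (neq_lift _ _)).
under eq_bigr do rewrite cramer big_distrr.
rewrite exchange_big /=.
under eq_bigr do (under eq_bigr do rewrite mulrA; rewrite -big_distrl /=).
have adjE i : \sum_b f a (v b) * \adj N b i = (\det N)%:M a i.
  by rewrite -mul_mx_adj [RHS]mxE; apply: eq_bigr => b _; rewrite [N a b]mxE.
under eq_bigr do rewrite adjE mxE.
rewrite (bigD1 a) //= eqxx mulr1n big1 ?addr0 // => i.
by rewrite eq_sym => /negPf ->; rewrite mulr0n mul0r.
Qed.

Hypothesis f_lin : forall i, is_R_linear (f i).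

Lemma minor_setcolD (v : 'I_k -> M) b0 u w t :
  minor f (setcol v b0 (u + t *: w)) =
  minor f (setcol v b0 u) + t * minor f (setcol v b0 w).
Proof.
rewrite /minor -det_tr -[X in _ = X + _]det_tr -[X in _ = _ + _ * X]det_tr.
set A := (X in \det X = _); set B := (X in _ = \det X + _).
set C := (X in _ = _ + _ * \det X).
rewrite (@determinant_multilinear _ _ A B C b0 1 t) ?mul1r //.
- by apply/rowP => i; rewrite !mxE /setcol !eqxx [u + _]addrC f_lin mul1r addrC.
- by apply/matrixP => i j; rewrite !mxE /setcol eq_sym (negPf (neq_lift _ _)).
- by apply/matrixP => i j; rewrite !mxE /setcol eq_sym (negPf (neq_lift _ _)).
Qed.

Lemma minor_setcol0 (v : 'I_k -> M) b0 : minor f (setcol v b0 0) = 0.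
Proof.
have := minor_setcolD v b0 0 0 1; rewrite scale1r addr0 mul1r.
by move/eqP; rewrite -subr_eq subrr eq_sym => /eqP.
Qed.

Lemma minor_setcol_sum I (r : seq I) (v : 'I_k -> M) b0 (c : I -> R) (y : I -> M) :
  minor f (setcol v b0 (\sum_(i <- r) c i *: y i)) =
  \sum_(i <- r) c i * minor f (setcol v b0 (y i)).
Proof.
elim: r => [|i r IHr]; first by rewrite !big_nil minor_setcol0.
by rewrite !big_cons addrC minor_setcolD IHr addrC.
Qed.

(* The new matrix is the old one times a unitriangular matrix. *)
Lemma minor_addcol (v : 'I_k -> M) b1 (w : 'I_k -> R) :
  w b1 = 0 -> minor f (fun b => v b + w b *: v b1) = minor f v.
Proof.
move=> w_b1; rewrite /minor.
pose U : 'M[R]_k := \matrix_(i, j) ((i == j)%:R + (i == b1)%:R * w j).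
have -> : \matrix_(i, b) f i (v b + w b *: v b1) = (\matrix_(i, b) f i (v b)) *m U.
  apply/matrixP => i b; rewrite !mxE.
  under eq_bigr do rewrite !mxE mulrDr.
  rewrite big_split /= (bigD1 b) //= big1 ?addr0; last by move=> j /negPf ->; rewrite mulr0.
  rewrite (bigD1 b1) //= big1 ?addr0; last by move=> j /negPf ->; rewrite mul0r mulr0.
  by rewrite !eqxx mul1r mulr1 [v b + _]addrC f_lin addrC mulrC.
rewrite det_mulmx -[RHS]mulr1; congr (_ * _).
rewrite (expand_det_col _ b1) (bigD1 b1) //= big1 ?addr0; last first.
  by move=> i /negPf ni; rewrite !mxE ni mul0r addr0 mul0r.
rewrite !mxE eqxx w_b1 mulr0 addr0 mul1r /cofactor addnn -signr_odd odd_double expr0 mul1r.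
rewrite -[RHS](@det1 R k.-1); congr (\det _); apply/matrixP => i j.
by rewrite !mxE (inj_eq lift_inj) [lift b1 i == b1]eq_sym (negPf (neq_lift b1 i)) mul0r addr0.
Qed.

Lemma minor_setcol_addcol (v : 'I_k -> M) b0 u (d : 'I_k -> R) :
  minor f (fun b => if b == b0 then u else v b + d b *: u) = minor f (setcol v b0 u).
Proof.
rewrite -(@minor_addcol (setcol v b0 u) b0 (fun b => if b == b0 then 0 else d b)) ?eqxx //.
congr (minor f _); apply: functional_extensionality => b; rewrite /setcol eqxx.
by case: eqP => _; rewrite ?scale0r ?addr0.
Qed.

Lemma minor_rank1 (v : 'I_k -> M) (d : 'I_k -> R) u :
  minor f (fun b => v b + d b *: u) = minor f v + \sum_t d t * minor f (setcol v t u).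
Proof.
suff sum_r r : uniq r -> minor f (fun b => v b + (b \in r)%:R * d b *: u) =
    minor f v + \sum_(t <- r) d t * minor f (setcol v t u).
  rewrite -big_enum -sum_r ?enum_uniq //; congr (minor f _).
  by apply: functional_extensionality => b; rewrite mem_enum mul1r.
elim: r => [_|t r IHr /= /andP[t_r uniq_r]].
  rewrite big_nil addr0; congr (minor f _).
  by apply: functional_extensionality => b; rewrite mul0r scale0r addr0.
rewrite big_cons addrCA -IHr //.
set V := fun b => v b + (b \in r)%:R * d b *: u.
have -> : (fun b => v b + (b \in t :: r)%:R * d b *: u) = setcol V t (V t + d t *: u).
  apply: functional_extensionality => b; rewrite /setcol /V inE.
  case: eqP => [->|_]; last by [].
  by rewrite (negPf t_r) mul0r scale0r addr0 mul1r.
rewrite minor_setcolD setcol_id // addrC; congr (_ + _ * _).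
by rewrite -(minor_setcol_addcol v t u (fun b => (b \in r)%:R * d b)).
Qed.

End FixedForms.

Lemma minor_expand_col k (f : 'I_k.+1 -> M -> R) (v : 'I_k.+1 -> M) (b : 'I_k.+1) :
  minor f v = \sum_(a < k.+1) (-1) ^+ (a + b)%N * f a (v b) *
                 minor (fun i => f (lift a i)) (fun j => v (lift b j)).
Proof.
rewrite /minor (expand_det_col _ b); apply: eq_bigr => a _.
rewrite !mxE /cofactor mulrCA mulrA; congr (_ * \det _).
by apply/matrixP => i j; rewrite !mxE.
Qed.

End Minors.

Section NprimeMinors.
Variables (R : comPzRingType) (M : lmodType R) (p : R -> Prop).
Hypothesis Hp : is_prime_ideal p.
Let Ip := prime_ideal_ideal Hp.

Lemma nprime_minor_expand k (f : 'I_k.+1 -> M -> R) (v : 'I_k.+1 -> M) b :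
  ~ p (minor f v) -> exists a, ~ p (minor (fun i => f (lift a i)) (fun j => v (lift b j))).
Proof.
move=> nDv; apply: NNPP => nex; apply: nDv; rewrite (minor_expand_col _ _ b).
apply: (ideal_sum Ip) => a _; apply: (idealMl Ip).
by apply: NNPP => nDa; apply: nex; exists a.
Qed.

Lemma nprime_minor_snoc k (f : 'I_k -> M -> R) g (v : 'I_k -> M) u :
  ~ p (minor f v) -> (forall i, p (f i u)) -> ~ p (g u) ->
  ~ p (minor (snocf f g) (snocf v u)).
Proof.
move=> nDv pfu ngu; rewrite (minor_expand_col _ _ ord_max) (bigD1 ord_max) //=.
rewrite (idealDr Ip); last first.
  apply: (ideal_sum Ip) => i; case: (unliftP ord_max i) => [j ->|->]; last by rewrite eqxx.
  by move=> _; apply: (idealMr Ip); apply: (idealMl Ip); rewrite /snocf liftK unlift_none.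
rewrite {1 2}/snocf unlift_none; apply: (nprimeM Hp).
  by apply: (nprimeM Hp) => //; apply: nprime_sign.
have snocf_lift T (w : 'I_k -> T) z : (fun i => snocf w z (lift ord_max i)) = w.
  by apply: functional_extensionality => i; rewrite /snocf liftK.
by rewrite !snocf_lift.
Qed.

Variables (k : nat) (f : 'I_k -> M -> R).

Lemma nprime_minor_inj (T : eqType) (y : T -> M) (s : 'I_k -> T) b b' :
  ~ p (minor f (fun b => y (s b))) -> b != b' -> s b != s b'.
Proof.
move=> nDs neq_bb'; apply/eqP => eq_s; apply: nDs.
by rewrite (minor_eq0 f neq_bb') ?eq_s //; apply: ideal0.
Qed.

Lemma nprime_minor_cramer (v : 'I_k -> M) u :
  ~ p (minor f v) -> (forall b, p (minor f (setcol v b u))) -> forall i, p (f i u).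
Proof.
move=> nDv pD i; have : p (minor f v * f i u).
  by rewrite minor_cramer; apply: (ideal_sum Ip) => b _; apply: (idealMl Ip).
by case/(prime_idealMP Hp).
Qed.

Hypothesis f_lin : forall i, is_R_linear (f i).

Lemma minor_rank1_congr (v : 'I_k -> M) (d : 'I_k -> R) u :
  (forall b, p (d b)) -> p (minor f (fun b => v b + d b *: u)) <-> p (minor f v).
Proof.
move=> pd; rewrite minor_rank1 // idealDr //.
by apply: (ideal_sum Ip) => t _; apply: idealMr.
Qed.

Lemma nprime_minor_rank1 (v : 'I_k -> M) (d : 'I_k -> R) u :
  ~ p (minor f v) ->
  ~ p (minor f (fun b => v b + d b *: u)) \/
  exists t, ~ p (d t) /\ ~ p (minor f (setcol v t u)).
Proof.
move=> nDv; apply: NNPP => /not_or_and [/NNPP pD nex]; apply: nDv.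
move: pD; rewrite minor_rank1 // idealDr //.
apply: (ideal_sum Ip) => t _; have [pdt|ndt] := classic (p (d t)); first exact: idealMr.
by apply: idealMl; apply: NNPP => nDt; apply: nex; exists t.
Qed.

End NprimeMinors.

(** * Free summands and minors *)

Section FreeSummands.
Variables (R : comPzRingType) (M : lmodType R) (E : (M -> R) -> Prop).
Hypothesis HE : hom_submodule E.

Lemma hom_submodule_linear f : E f -> is_R_linear f.
Proof. by case: HE => + _ _ _; apply. Qed.

Lemma hom_submodule_sum I (r : seq I) (g : I -> R) (f : I -> M -> R) :
  (forall i, E (f i)) -> E (fun m => \sum_(i <- r) g i * f i m).
Proof.
case: HE => _ E0 ED EZ Ef; elim: r => [|i r IHr].
  rewrite (_ : (fun m => _) = fun _ => 0) //.
  by apply: functional_extensionality => m; rewrite big_nil.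
rewrite (_ : (fun m => _) = fun m => g i * f i m + \sum_(j <- r) g j * f j m).
  by apply: ED; [apply: EZ|].
by apply: functional_extensionality => m; rewrite big_cons.
Qed.

Lemma span_of_gen m (y : nat -> M) i : (0 < i <= m)%N -> span_of m y (y i).
Proof.
move=> i_range; exists (fun j => (j == i)%:R).
rewrite (bigD1_seq i) /= ?mem_index_iota ?iota_uniq // eqxx scale1r big1 ?addr0 //.
by move=> j /negPf ->; rewrite scale0r.
Qed.

Variable p : R -> Prop.
Hypothesis Hp : is_prime_ideal p.
Let Ip := prime_ideal_ideal Hp.

(* The adjugate of the matrix [f_i (v_j)] turns the forms into a dual basis of the columns
   over the localization at the determinant. *)
Lemma delta_ge_minor m (y : nat -> M) k (f : 'I_k -> M -> R) (v : 'I_k -> M) :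
  (forall i, E (f i)) -> (forall b, span_of m y (v b)) -> ~ p (minor f v) ->
  delta_ge p E m y k.
Proof.
move=> Ef span_v nDv; exists k; split => //.
set N := \matrix_(i, j) f i (v j).
exists v, (fun _ => 1), (fun i m => \sum_b (\adj N) i b * f b m), (fun _ => minor f v).
split=> [j|i|i j]; first by split; [apply: span_v | apply: nprime1].
  by split=> //; apply: hom_submodule_sum.
exists 1; split; first exact: nprime1.
have := congr1 (fun A : 'M[R]_k => A i j) (mul_adj_mx N); rewrite !mxE => adjE.
rewrite mul1r !mulr1.
have -> : \sum_b \adj N i b * f b (v j) = \det N *+ (i == j).
  by rewrite -adjE; apply: eq_bigr => b _; rewrite !mxE.
by case: (i == j); rewrite /minor -/N ?mulr1n ?mul1r ?mulr0n ?mul0r subrr.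
Qed.

(* Clearing the denominators of the delta_ij relations makes [f_i (e_j)] diagonal with
   diagonal entries outside p. *)
Lemma minor_of_delta_ge m (y : nat -> M) k :
  delta_ge p E m y k -> exists (f : 'I_k -> M -> R) (v : 'I_k -> M),
    [/\ forall i, E (f i), forall b, span_of m y (v b) & ~ p (minor f v)].
Proof.
case=> k' [le_kk' [e [s [f [t [Hs Ht Hl]]]]]].
have [w Hw] := @fin_all_exists _ (fun _ => R) (fun (ij : 'I_k' * 'I_k') wij => ~ p wij /\
   wij * (f ij.1 (e ij.2) * 1 - (ij.1 == ij.2)%:R * (t ij.1 * s ij.2)) = 0)
   (fun ij => Hl ij.1 ij.2).
pose W := \prod_(ij : 'I_k' * 'I_k') w ij.
have nW : ~ p W by apply: (nprime_prod Hp) => ij _; case: (Hw ij).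
have HW i j : W * f i (e j) = W * ((i == j)%:R * (t i * s j)).
  case: (Hw (i, j)) => _ /=; rewrite mulr1 mulrBr => /eqP; rewrite subr_eq0 => /eqP wE.
  by rewrite /W (bigD1 (i, j)) //= mulrAC wE mulrAC.
pose wd := widen_ord le_kk'.
exists (fun i => f (wd i)), (fun b => e (wd b)); split.
- by move=> i; case: (Ht (wd i)).
- by move=> b; case: (Hs (wd b)).
suff : ~ p (W ^+ k * minor (fun i => f (wd i)) (fun b => e (wd b))) by move/(nprimeMr Hp).
rewrite /minor -detZ.
have -> : W *: \matrix_(i, j) f (wd i) (e (wd j)) =
          diag_mx (\row_i (W * (t (wd i) * s (wd i)))).
  apply/matrixP => i j; rewrite !mxE HW.
  have -> : (wd i == wd j) = (i == j).
    by apply/eqP/eqP => [/(congr1 val) eq_w|->//]; apply: val_inj.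
  by case: eqP => [->|_]; rewrite ?mulr1n ?mul1r ?mulr0n ?mul0r ?mulr0.
rewrite det_diag; apply: (nprime_prod Hp) => i _; rewrite mxE.
apply: (nprimeM Hp) => //; apply: (nprimeM Hp); [by case: (Ht (wd i)) | by case: (Hs (wd i))].
Qed.

Lemma nprime_minor_gen m (y : nat -> M) k (f : 'I_k -> M -> R) (v : 'I_k -> M) :
  (forall i, E (f i)) -> (forall b, span_of m y (v b)) -> ~ p (minor f v) ->
  exists s : 'I_k -> nat, (forall b, (0 < s b <= m)%N) /\ ~ p (minor f (fun b => y (s b))).
Proof.
move=> Ef span_v nDv; apply: NNPP => nex; apply: nDv.
have lin i := hom_submodule_linear (Ef i).
suff gen_from t w : (forall b : 'I_k, (t <= b)%N -> exists i, (0 < i <= m)%N /\ w b = y i) ->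
    (forall b, span_of m y (w b)) -> p (minor f w).
  by apply: (gen_from k) => // b; rewrite leqNgt ltn_ord.
elim: t w => [|t IHt] w gen_w span_w.
  have [s Hs] := @fin_all_exists _ (fun _ => nat)
    (fun b i => (0 < i <= m)%N /\ w b = y i)
    (fun b => gen_w b (leq0n _)).
  have -> : w = fun b => y (s b) by apply: functional_extensionality => b; case: (Hs b).
  by apply: NNPP => nDs; apply: nex; exists s; split => // b; case: (Hs b).
have [lt_tk | le_kt] := ltnP t k; last first.
  by apply: IHt => // b le_tb; move: (leq_trans le_kt le_tb); rewrite leqNgt ltn_ord.
pose t' := Ordinal lt_tk; have [c wE] := span_w t'.
rewrite -(@setcol_id _ _ w t' (w t')) // wE minor_setcol_sum // big_seq.
apply: (ideal_sum Ip) => i; rewrite mem_index_iota ltnS => i_range.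
apply: (idealMl Ip); apply: IHt => [b le_tb|b].
  rewrite /setcol; case: eqP => [_|ne_bt]; first by exists i.
  apply: gen_w; rewrite ltn_neqAle le_tb andbT; apply/eqP => tb; apply: ne_bt; exact: val_inj.
by rewrite /setcol; case: eqP => // _; apply: span_of_gen.
Qed.

Lemma delta_ge_gen m (y : nat -> M) k :
  delta_ge p E m y k <-> exists (f : 'I_k -> M -> R) (s : 'I_k -> nat),
    [/\ forall i, E (f i), forall b, (0 < s b <= m)%N & ~ p (minor f (fun b => y (s b)))].
Proof.
split=> [/minor_of_delta_ge [f [v [Ef span_v nDv]]] | [f [s [Ef s_range nDs]]]].
  by have [s [s_range nDs]] := nprime_minor_gen Ef span_v nDv; exists f, s.
by apply: (delta_ge_minor Ef _ nDs) => b; apply: span_of_gen.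
Qed.

End FreeSummands.

Lemma delta_ge0 (R : comPzRingType) (M : lmodType R) (E : (M -> R) -> Prop) p m (y : nat -> M) :
  delta_ge p E m y 0.
Proof.
exists 0%N; split=> //.
by exists (fun _ => 0), (fun _ => 1), (fun _ _ => 0), (fun _ => 1); split; case.
Qed.

Lemma delta_ge_open (R : comPzRingType) (M : lmodType R) (E : (M -> R) -> Prop)
    (p : R -> Prop) m (y : nat -> M) k :
  hom_submodule E -> is_prime_ideal p -> delta_ge p E m y k ->
  exists r, ~ p r /\ forall q, is_prime_ideal q -> ~ q r -> delta_ge q E m y k.
Proof.
move=> HE Hp /(delta_ge_gen HE Hp) [f [s [Ef s_range nDs]]]; exists (minor f (fun b => y (s b))).
split=> // q Hq nqD; apply: (delta_ge_minor HE Hq Ef _ nqD) => b; exact: span_of_gen.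
Qed.

(** * The shifted set at a prime *)

Lemma leq_cover k n (s : 'I_k -> nat) :
  (forall j, (0 < j <= n)%N -> exists b, s b = j) -> (n <= k)%N.
Proof.
move=> cover; have [g gK] := @fin_all_exists _ (fun _ => 'I_k)
  (fun (i : 'I_n) b => s b = i.+1) (fun i => cover i.+1 (ltn_ord i)).
have g_inj : injective g by move=> i i' eq_g; apply: val_inj; have := gK i; rewrite eq_g gK => -[].
by have := leq_card _ g_inj; rewrite !card_ord.
Qed.

Section ShiftedSet.
Variables (R : comPzRingType) (M : lmodType R) (E : (M -> R) -> Prop).
Variables (n : nat) (x : nat -> M) (a : R).

Definition shift_weight (j : nat) : R := if j == 1%N then a else 1.

Definition shifted (c : nat -> R) (j : nat) : M := x j + (shift_weight j * c j) *: x n.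

Hypothesis HE : hom_submodule E.
Variable p : R -> Prop.
Hypothesis Hp : is_prime_ideal p.
Let Ip := prime_ideal_ideal Hp.

(* The local condition at p fed to the choice of c: coefficients can be corrected at p by
   multiples of any element outside p. *)
Definition adjustable k := forall c bt, ~ p bt ->
  exists z, delta_ge p E n.-1 (shifted (fun i => c i + bt * z i)) k.

Lemma exists_shift0 k c bt : delta_ge p E n.-1 (shifted c) k ->
  exists z, delta_ge p E n.-1 (shifted (fun i => c i + bt * z i)) k.
Proof.
exists (fun _ => 0).
by rewrite (_ : (fun i => _) = c) //; apply: functional_extensionality => i; rewrite mulr0 addr0.
Qed.

Lemma adjustableW k : (forall c, delta_ge p E n.-1 (shifted c) k) -> adjustable k.
Proof. by move=> delta_all c bt _; apply: exists_shift0. Qed.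

Lemma shifted_minor k (f : 'I_k -> M -> R) (s : 'I_k -> nat) c :
  (forall i, E (f i)) -> (forall b, (0 < s b <= n.-1)%N) ->
  ~ p (minor f (fun b => shifted c (s b))) -> delta_ge p E n.-1 (shifted c) k.
Proof. by move=> Ef s_range nD; apply/(delta_ge_gen HE Hp); exists f, s. Qed.

Lemma minor_shifted_setcol_xn k (f : 'I_k -> M -> R) (s : 'I_k -> nat) c b0 :
  (forall i, E (f i)) ->
  minor f (setcol (fun b => shifted c (s b)) b0 (x n)) = minor f (fun b => x (setcol s b0 n b)).
Proof.
move=> Ef; have lin i := hom_submodule_linear HE (Ef i).
by rewrite [LHS](minor_setcol_addcol lin (fun b => x (s b))) setcol_map.
Qed.

(* Once x_n is a column of the minor, the shifts become column operations, and expanding along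
   the x_n column leaves a minor of the shifted set. *)
Lemma delta_ge_shifted_xn k (f : 'I_k.+1 -> M -> R) (s : 'I_k.+1 -> nat) b0 :
  (forall i, E (f i)) -> (forall b, (0 < s b <= n)%N) -> s b0 = n ->
  ~ p (minor f (fun b => x (s b))) -> forall c, delta_ge p E n.-1 (shifted c) k.
Proof.
move=> Ef s_range s_b0 nDs c.
have := nDs; rewrite -(setcol_id s_b0) -(@minor_shifted_setcol_xn _ f s c b0 Ef).
case/(nprime_minor_expand Hp b0) => i nD.
apply: (@shifted_minor _ (fun j => f (lift i j)) (fun j => s (lift b0 j))) => [j|j|].
- exact: Ef.
- have := s_range (lift b0 j); have := nprime_minor_inj Hp nDs (neq_lift b0 j); rewrite s_b0; lia.
- by rewrite setcol_lift in nD.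
Qed.

Lemma delta_ge_shifted_minor k (f : 'I_k.+1 -> M -> R) (s : 'I_k.+1 -> nat) :
  (forall i, E (f i)) -> (forall b, (0 < s b <= n)%N) ->
  ~ p (minor f (fun b => x (s b))) -> forall c, delta_ge p E n.-1 (shifted c) k.
Proof.
move=> Ef s_range nDs c.
have [[b0 s_b0]|no_xn] := classic (exists b0, s b0 = n).
  exact: delta_ge_shifted_xn s_range s_b0 nDs c.
have lin i := hom_submodule_linear HE (Ef i).
have s_lt b : (s b < n)%N.
  have := s_range b; have : s b <> n by move=> s_bn; apply: no_xn; exists b.
  lia.
have [nD|[t [_ nDt]]] :=
  nprime_minor_rank1 Hp lin (fun b => shift_weight (s b) * c (s b)) (x n) nDs.
  have [i nDi] := nprime_minor_expand Hp ord0 nD.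
  apply: (@shifted_minor _ (fun j => f (lift i j)) (fun j => s (lift ord0 j))) => // j.
  have := s_range (lift ord0 j); have := s_lt (lift ord0 j); lia.
rewrite setcol_map in nDt.
apply: (@delta_ge_shifted_xn _ _ (setcol s t n) t Ef _ _ nDt); last by rewrite /setcol eqxx.
by move=> b; rewrite /setcol; case: eqP => _; have := s_range t; have := s_range b; lia.
Qed.

Lemma delta_ge_shifted_pred k :
  delta_ge p E n x k.+1 -> forall c, delta_ge p E n.-1 (shifted c) k.
Proof.
by case/(delta_ge_gen HE Hp) => f [s [Ef s_range nDs]]; apply: delta_ge_shifted_minor nDs.
Qed.

Lemma delta_ge_shifted_congr c c' k : (forall i, p (c' i - c i)) ->
  delta_ge p E n.-1 (shifted c) k -> delta_ge p E n.-1 (shifted c') k.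
Proof.
move=> pc /(delta_ge_gen HE Hp) [f [s [Ef s_range nDs]]].
have lin i := hom_submodule_linear HE (Ef i).
apply: (shifted_minor Ef s_range).
have -> : (fun b => shifted c' (s b)) = fun b =>
    shifted c (s b) + (shift_weight (s b) * (c' (s b) - c (s b))) *: x n.
  apply: functional_extensionality => b.
  by rewrite /shifted -addrA -scalerDl -mulrDr (addrC (c (s b))) subrK.
by rewrite (minor_rank1_congr Hp lin) // => b; apply: (idealMl Ip).
Qed.

(* Raising c_{j0} by bt changes the column x'_{j0} by a multiple of x_n; placing x'_{j0} where
   x_n was, one of the two choices of c_{j0} gives a minor outside p. *)
Lemma adjustable_free_index k (f : 'I_k -> M -> R) (s : 'I_k -> nat) b0 j0 :
  (forall i, E (f i)) -> (forall b, (0 < s b <= n)%N) -> s b0 = n ->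
  ~ p (minor f (fun b => x (s b))) ->
  (0 < j0 <= n.-1)%N -> (forall b, s b != j0) -> ~ p (shift_weight j0) -> adjustable k.
Proof.
move=> Ef s_range s_b0 nDs j0_range j0_free nw c bt nbt.
have lin i := hom_submodule_linear HE (Ef i).
have tau_range b : (0 < setcol s b0 j0 b <= n.-1)%N.
  rewrite /setcol; case: eqP => [//|/eqP ne_bb0].
  have := s_range b; have := nprime_minor_inj Hp nDs ne_bb0; rewrite s_b0; lia.
have [nDc|/NNPP pDc] := classic (~ p (minor f (fun b => shifted c (setcol s b0 j0 b)))).
  exact/exists_shift0/(shifted_minor Ef tau_range nDc).
exists (fun i => (i == j0)%:R); apply: (shifted_minor Ef tau_range).
have -> : (fun b => shifted (fun i => c i + bt * (i == j0)%:R) (setcol s b0 j0 b)) =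
    setcol (fun b => shifted c (setcol s b0 j0 b)) b0
      (shifted c j0 + (shift_weight j0 * bt) *: x n).
  apply: functional_extensionality => b; rewrite /setcol /shifted.
  case: eqP => [_|_]; first by rewrite eqxx mulr1 mulrDr scalerDl addrA.
  by rewrite (negPf (j0_free b)) mulr0 addr0.
rewrite minor_setcolD // setcol_map setcol_setcol minor_shifted_setcol_xn //.
rewrite setcol_setcol (setcol_id s_b0) (idealDl Ip) //.
by apply: (nprimeM Hp) => //; apply: (nprimeM Hp).
Qed.

Lemma adjustable_no_xn k (f : 'I_k -> M -> R) (s : 'I_k -> nat) :
  (forall i, E (f i)) -> (forall b, (0 < s b <= n.-1)%N) ->
  ~ p (minor f (fun b => x (s b))) -> adjustable k.
Proof.
move=> Ef s_range nDs c bt nbt.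
have lin i := hom_submodule_linear HE (Ef i).
have [nD|[t [nwc nDt]]] :=
  nprime_minor_rank1 Hp lin (fun b => shift_weight (s b) * c (s b)) (x n) nDs.
  exact/exists_shift0/(shifted_minor Ef s_range nD).
rewrite setcol_map in nDt.
apply: (@adjustable_free_index _ _ (setcol s t n) t (s t) Ef _ _ nDt) => //.
- by move=> b; rewrite /setcol; case: eqP => _; have := s_range t; have := s_range b; lia.
- by rewrite /setcol eqxx.
- move=> b; rewrite /setcol; have [_|ne_bt] := eqVneq b t; first by have := s_range t; lia.
  by have := nprime_minor_inj Hp nDs ne_bt.
- exact (nprimeMl Hp nwc).
Qed.

Lemma saturated_indices k (s : 'I_k -> nat) b0 : s b0 = n -> (1 < n)%N -> (k < n)%N ->
  (forall j, (0 < j <= n.-1)%N -> ~ p (shift_weight j) -> exists b, s b = j) ->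
  p a /\ forall b, s b != 1%N.
Proof.
move=> s_b0 lt1n lt_kn hit.
have cover_from2 j : (1 < j <= n)%N -> exists b, s b = j.
  move=> j_range; have [->|ne_jn] := eqVneq j n; first by exists b0.
  apply: hit; first lia.
  by rewrite /shift_weight ifN; [apply: nprime1 | apply/eqP; lia].
split=> [|b]; first apply: NNPP => na.
  suff : (n <= k)%N by lia.
  apply: (@leq_cover k n s) => j j_range.
  have [->|ne_j1] := eqVneq j 1%N; last by apply: cover_from2; lia.
  by apply: hit; [lia | rewrite /shift_weight eqxx].
apply/eqP => s_b1; suff : (n <= k)%N by lia.
apply: (@leq_cover k n s) => j j_range; have [->|ne_j1] := eqVneq j 1%N; first by exists b.
by apply: cover_from2; lia.
Qed.

(* Here a lies in p and the minor involves exactly x_2, ..., x_n; the unit value of some g at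
   x_1 then either lets x_1 replace a column or, by Cramer's rule, enlarges the minor. *)
Lemma adjustable_saturated k (f : 'I_k -> M -> R) (s : 'I_k -> nat) b0 :
  (forall i, E (f i)) -> (forall b, (0 < s b <= n)%N) -> s b0 = n ->
  ~ p (minor f (fun b => x (s b))) -> (1 < n)%N -> (k < n)%N ->
  (forall j, (0 < j <= n.-1)%N -> ~ p (shift_weight j) -> exists b, s b = j) ->
  (~ p a \/ exists g, E g /\ ~ p (g (x 1%N))) -> adjustable k.
Proof.
move=> Ef s_range s_b0 nDs lt1n lt_kn hit unit_x1.
have [pa s_neq1] := saturated_indices s_b0 lt1n lt_kn hit.
have [[b nDb]|pDb] := classic (exists b, ~ p (minor f (setcol (fun b => x (s b)) b (x 1%N)))).
  rewrite setcol_map in nDb.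
  have [s_bn|ne_sbn] := eqVneq (s b) n.
    apply: (adjustable_no_xn Ef _ nDb) => b'; rewrite /setcol; case: eqP => [_|/eqP ne_b'b].
      by lia.
    have := s_range b'; have := nprime_minor_inj Hp nDs ne_b'b; rewrite s_bn; lia.
  have ne_b0b : b0 != b by apply: contraNneq ne_sbn => <-; rewrite s_b0.
  apply: (@adjustable_free_index _ _ (setcol s b 1%N) b0 (s b) Ef _ _ nDb).
  - by move=> b'; rewrite /setcol; case: eqP => _; [lia | apply: s_range].
  - by rewrite /setcol (negPf ne_b0b).
  - by have := s_range b; have := s_neq1 b; lia.
  - move=> b'; rewrite /setcol; have [_|ne_b'b] := eqVneq b' b; first by rewrite eq_sym s_neq1.
    by have := nprime_minor_inj Hp nDs ne_b'b.
  - by rewrite /shift_weight (negPf (s_neq1 b)); apply: nprime1.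
have pfx1 : forall i, p (f i (x 1%N)).
  apply: (nprime_minor_cramer Hp nDs) => b.
  by apply: NNPP => nD; apply: pDb; exists b.
case: unit_x1 => [//|[g [Eg ngx1]]].
apply: adjustableW; apply: (@delta_ge_shifted_minor _ (snocf f g) (snocf s 1%N)).
- by move=> i; rewrite /snocf; case: unlift.
- by move=> b; rewrite /snocf; case: unlift => [b'|]; [apply: s_range | lia].
- by rewrite -snocf_map; apply: nprime_minor_snoc.
Qed.

Lemma adjustable_local k : (1 < n)%N -> (k <= n.-1)%N -> delta_ge p E n x k ->
  (~ p a \/ exists g, E g /\ ~ p (g (x 1%N))) -> adjustable k.
Proof.
move=> lt1n le_kn /(delta_ge_gen HE Hp) [f [s [Ef s_range nDs]]] unit_x1.
have [[b0 s_b0]|no_xn] := classic (exists b0, s b0 = n); last first.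
  apply: (adjustable_no_xn Ef _ nDs) => b; have := s_range b.
  have : s b <> n by move=> s_bn; apply: no_xn; exists b.
  lia.
have [[j0 [j0_range j0_free nw]]|saturated] := classic (exists j0,
    [/\ (0 < j0 <= n.-1)%N, forall b, s b != j0 & ~ p (shift_weight j0)]).
  exact: adjustable_free_index s_range s_b0 nDs j0_range j0_free nw.
apply: (adjustable_saturated Ef s_range s_b0 nDs) => //; first lia.
move=> j j_range nw; apply: NNPP => nhit; apply: saturated; exists j; split => // b.
by apply/eqP => s_bj; apply: nhit; exists b.
Qed.

End ShiftedSet.

(** * Noetherian rings *)

Definition classic_eq_dec {T : Type} (u v : T) : {u = v} + {u <> v} :=
  excluded_middle_informative (u = v).

Lemma basic_prime (R : comPzRingType) (X : (R -> Prop) -> Prop) p :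
  basic X -> X p -> is_prime_ideal p.
Proof. by case=> + _; apply. Qed.

Section Noetherian.
Variable R : comPzRingType.
Implicit Types (I J P Q : R -> Prop) (F : (R -> Prop) -> Prop) (Qs : list (R -> Prop)).

Definition incl I J := forall r, I r -> J r.

Definition radical I := forall r, I r <-> bigcapI (fun q => is_prime_ideal q /\ incl I q) r.

Definition finite_prime_inter I := exists Qs,
  (forall Q, List.In Q Qs -> is_prime_ideal Q) /\ forall r, I r <-> (forall Q, List.In Q Qs -> Q r).

Lemma incl_antisym I J : incl I J -> incl J I -> I = J.
Proof.
move=> IJ JI; apply: functional_extensionality => r.
by apply: propositional_extensionality; split; [apply: IJ | apply: JI].
Qed.

Lemma bigcapI_ideal F : (forall q, F q -> is_ideal q) -> is_ideal (bigcapI F).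
Proof.
move=> F_ideal; split=> [q /F_ideal /ideal0 //|r s Ir Is q Fq|r s Is q Fq].
  exact: (idealD (F_ideal q Fq) (Ir q Fq) (Is q Fq)).
exact: (idealMl (F_ideal q Fq) _ (Is q Fq)).
Qed.

Lemma bigcapI_radical F : (forall q, F q -> is_prime_ideal q) -> radical (bigcapI F).
Proof.
move=> F_prime r; split=> [Fr q [_ Fq]|Fr q Fq]; first exact: Fq.
by apply: Fr; split=> [|s]; [apply: F_prime | apply].
Qed.

Lemma nprime_common p Qs : is_prime_ideal p ->
  (forall Q, List.In Q Qs -> is_ideal Q /\ exists r, Q r /\ ~ p r) ->
  exists r, ~ p r /\ forall Q, List.In Q Qs -> Q r.
Proof.
move=> Hp; elim: Qs => [|Q Qs IHQs] HQs; first by exists 1; split=> //; apply: nprime1.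
have [Q_ideal [r1 [Qr1 nr1]]] := HQs Q (or_introl erefl).
have [r2 [nr2 Qsr2]] := IHQs (fun Q' inQ' => HQs Q' (or_intror inQ')).
exists (r1 * r2); split; first exact: nprimeM.
move=> Q' [<-|inQ']; first exact: idealMr.
by apply: (idealMl (proj1 (HQs Q' (or_intror inQ')))); apply: Qsr2.
Qed.

Lemma prime_avoidance q Qs : is_prime_ideal q ->
  (forall Q, List.In Q Qs -> is_prime_ideal Q) ->
  (forall r, (forall Q, List.In Q Qs -> Q r) -> q r) -> exists Q, List.In Q Qs /\ incl Q q.
Proof.
move=> Hq Qs_prime Qs_q; apply: NNPP => nex.
have [r [nqr Qsr]] : exists r, ~ q r /\ forall Q, List.In Q Qs -> Q r.
  apply: nprime_common => // Q inQ; split; first by case: (Qs_prime Q inQ).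
  apply: NNPP => nr; apply: nex; exists Q; split=> // r Qr.
  by apply: NNPP => nqr; apply: nr; exists r.
by apply: nqr; apply: Qs_q.
Qed.

Lemma exists_minimal Qs : Qs <> [::] ->
  exists P, List.In P Qs /\ forall Q, List.In Q Qs -> incl Q P -> incl P Q.
Proof.
elim: Qs => [//|Q0 Qs IHQs] _.
have [->|Qs_neq0] := classic (Qs = [::]).
  by exists Q0; split=> [|Q [<-|]]; [left | |].
have [P [inP P_min]] := IHQs Qs_neq0.
have [[Q0P nPQ0]|] := classic (incl Q0 P /\ ~ incl P Q0).
  exists Q0; split=> [|Q [<-|inQ] QQ0] //; first by left.
  have PQ : incl P Q by apply: (P_min Q inQ) => r Qr; apply: Q0P; apply: QQ0.
  by case: nPQ0 => r Pr; apply: QQ0; apply: PQ.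
move=> /not_and_or P_min0; exists P; split; first by right.
move=> Q [<-|inQ] QP; last exact: P_min inQ QP.
by case: P_min0 => [/(_ QP) [] | /NNPP].
Qed.

(* Primes are handled from a minimal one down: an element of all the other primes but not of
   the minimal one moves the solution only modulo the other primes. *)
Lemma exists_common_solution Qs (G : (R -> Prop) -> (nat -> R) -> Prop) :
  (forall P, List.In P Qs -> is_prime_ideal P) ->
  (forall P, List.In P Qs -> forall c c', (forall i, P (c' i - c i)) -> G P c -> G P c') ->
  (forall P, List.In P Qs -> forall c t, ~ P t -> exists z, G P (fun i => c i + t * z i)) ->
  exists c, forall P, List.In P Qs -> G P c.
Proof.
move: {2}(length Qs) (leqnn (length Qs)) => N; elim: N Qs => [|N IHN] Qs.
  by case: Qs => // _ _ _ _; exists (fun _ => 0).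
move=> len_Qs Qs_prime G_congr G_adjust.
have [->|Qs_neq0] := classic (Qs = [::]); first by exists (fun _ => 0).
have [P [inP P_min]] := exists_minimal Qs_neq0.
pose Qs' := List.remove classic_eq_dec P Qs.
have inQs' Q : List.In Q Qs' -> List.In Q Qs /\ Q <> P by apply: List.in_remove.
have [c0 Hc0] : exists c, forall Q, List.In Q Qs' -> G Q c.
  apply: IHN => [|Q /inQs' [inQ _]|Q /inQs' [inQ _]|Q /inQs' [inQ _]].
  - by have /ltP := List.remove_length_lt classic_eq_dec _ _ inP; rewrite -/Qs'; lia.
  - exact: Qs_prime.
  - exact: G_congr.
  - exact: G_adjust.
have HP := Qs_prime P inP.
have [t [nPt Qs't]] : exists t, ~ P t /\ forall Q, List.In Q Qs' -> Q t.
  apply: nprime_common => // Q /inQs' [inQ neQP]; split; first by case: (Qs_prime Q inQ).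
  apply: NNPP => nex; apply: neQP; apply: incl_antisym; last first.
    by apply: P_min => // r Qr; apply: NNPP => nPr; apply: nex; exists r.
  by move=> r Qr; apply: NNPP => nPr; apply: nex; exists r.
have [z Gz] := G_adjust P inP c0 t nPt.
exists (fun i => c0 i + t * z i) => Q inQ; have [->//|neQP] := classic (Q = P).
have inQ' : List.In Q Qs' by apply: List.in_in_remove.
apply: (G_congr Q inQ c0 _ _ (Hc0 Q inQ')) => i; rewrite addrC addKr.
by apply: (idealMr (prime_ideal_ideal (Qs_prime Q inQ))); apply: Qs't.
Qed.

Hypothesis HN : noetherian R.

Lemma noetherian_chain_stationary (C : nat -> R -> Prop) :
  (forall m, is_ideal (C m)) -> (forall m m', (m <= m')%N -> incl (C m) (C m')) ->
  exists N, forall m, incl (C m) (C N).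
Proof.
move=> C_ideal C_mono; pose U r := exists m, C m r.
have U_ideal : is_ideal U.
  split=> [|r s [m1 Cr] [m2 Cs]|r s [m Cs]]; first by exists 0%N; apply: ideal0.
    exists (maxn m1 m2); apply: (idealD (C_ideal _)).
      by apply: (C_mono m1) Cr; apply: leq_maxl.
    by apply: (C_mono m2) Cs; apply: leq_maxr.
  by exists m; apply: (idealMl (C_ideal m)).
have [gens Ugens] := HN U_ideal.
have U_gen (i : 'I_(size gens)) : U gens`_i.
  apply/Ugens; exists (fun j : nat => (j == i)%:R).
  rewrite (bigD1 i) //= eqxx mul1r big1 ?addr0 // => j neq_ji.
  by rewrite (_ : (nat_of_ord j == i) = false) ?mul0r //; apply: negPf.
have [m Hm] := @fin_all_exists _ (fun _ => nat) (fun (i : 'I_(size gens)) m => C m gens`_i) U_gen.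
exists (\max_(i < size gens) m i) => m' r Cr.
have /Ugens [c ->] : U r by exists m'.
apply: (ideal_sum (C_ideal _)) => i _; apply: (idealMl (C_ideal _)).
by apply: (C_mono (m i)) (Hm i); apply: leq_bigmax.
Qed.

Lemma noetherian_maximal F : (forall I, F I -> is_ideal I) -> (exists I, F I) ->
  exists I, F I /\ forall J, F J -> incl I J -> incl J I.
Proof.
move=> F_ideal [I0 FI0]; apply: NNPP => nmax.
have next_ex I : F I -> exists J, [/\ F J, incl I J & exists r, J r /\ ~ I r].
  move=> FI; apply: NNPP => nJ; apply: nmax; exists I; split=> // J FJ IJ r Jr.
  by apply: NNPP => nIr; apply: nJ; exists J; split=> //; exists r.
pose next I :=
  epsilon (inhabits I0) (fun J => F I -> [/\ F J, incl I J & exists r, J r /\ ~ I r]).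
have nextP I : F I -> [/\ F (next I), incl I (next I) & exists r, next I r /\ ~ I r].
  move=> FI; have [J HJ] := next_ex I FI.
  by apply: (epsilon_spec (inhabits I0) _ (ex_intro _ J (fun _ => HJ))).
pose chain m := iter m next I0.
have F_chain m : F (chain m) by elim: m => [|m IHm] //=; case: (nextP _ IHm).
have chain_mono m m' : (m <= m')%N -> incl (chain m) (chain m').
  move=> /subnK <-; elim: (m' - m)%N => [|d IHd] r Cr; first by rewrite add0n.
  by rewrite addSn /=; case: (nextP _ (F_chain (d + m)%N)) => _ + _; apply; apply: IHd.
have [N chainN] := noetherian_chain_stationary (fun m => F_ideal _ (F_chain m)) chain_mono.
have [_ _ [r [Cr nCr]]] := nextP _ (F_chain N).
by apply: nCr; apply: (chainN N.+1).
Qed.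

Lemma radical_finite_inter I0 : is_ideal I0 -> radical I0 -> finite_prime_inter I0.
Proof.
move=> I0_ideal I0_rad; apply: NNPP => nfin0.
have [I [[I_ideal [I_rad nfin]] I_max]] :=
  noetherian_maximal (F := fun J => is_ideal J /\ radical J /\ ~ finite_prime_inter J)
    (fun J => @proj1 _ _) (ex_intro _ _ (conj I0_ideal (conj I0_rad nfin0))).
apply: nfin; have [I1|nI1] := classic (I 1).
  exists [::]; split=> // r; split=> // _.
  by rewrite -(mulr1 r); apply: idealMl.
have [I_prime|nI_prime] := classic (is_prime_ideal I).
  by exists [:: I]; split=> [Q [<-|]//|r]; split=> [Ir Q [<-|]//|]; apply; left.
have [u [v [Iuv [nIu nIv]]]] : exists u v, I (u * v) /\ ~ I u /\ ~ I v.
  apply: NNPP => nuv; apply: nI_prime; split=> // u v Iuv.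
  by apply: NNPP => /not_or_and [nIu nIv]; apply: nuv; exists u, v.
pose Iw w := bigcapI (fun q => is_prime_ideal q /\ incl I q /\ q w).
have Iw_prime w q : is_prime_ideal q /\ incl I q /\ q w -> is_prime_ideal q by case.
have I_Iw w : incl I (Iw w) by move=> r Ir q [_ [Iq _]]; apply: Iq.
have Iw_fin w : ~ I w -> finite_prime_inter (Iw w).
  move=> nIw; apply: NNPP => nfin_w; apply: nIw.
  have Iw_w : Iw w w by move=> q [_ []].
  apply: (I_max (Iw w) _ (I_Iw w) w Iw_w); split.
    by apply: bigcapI_ideal => q /Iw_prime [].
  by split=> //; apply: bigcapI_radical => q /Iw_prime.
have [Qu [Qu_prime Hu]] := Iw_fin u nIu.
have [Qv [Qv_prime Hv]] := Iw_fin v nIv.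
exists (Qu ++ Qv); split=> [Q /List.in_app_iff [] //|r]; first by apply: Qu_prime.
  by apply: Qv_prime.
split=> [Ir Q /List.in_app_iff [inQ|inQ]|QSr]; first by apply: (Hu r).1 inQ; apply: I_Iw.
  by apply: (Hv r).1 inQ; apply: I_Iw.
apply/I_rad => q [q_prime Iq].
have Qu_r Q : List.In Q Qu -> Q r by move=> inQ; apply: QSr; apply/List.in_app_iff; left.
have Qv_r Q : List.In Q Qv -> Q r by move=> inQ; apply: QSr; apply/List.in_app_iff; right.
have [qu|qv] := prime_idealMP q_prime (Iq _ Iuv).
  exact: ((Hu r).2 Qu_r q (conj q_prime (conj Iq qu))).
exact: ((Hv r).2 Qv_r q (conj q_prime (conj Iq qv))).
Qed.

End Noetherian.

Section ClosedSubsets.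
Variable R : comPzRingType.
Implicit Types (P Q q : R -> Prop) (Qs : list (R -> Prop)).
Variables (X Z : (R -> Prop) -> Prop).
Hypothesis HX : basic X.
Hypothesis Z_X : forall q, Z q -> X q.
Hypothesis Z_closed : forall Q, X Q -> ~ Z Q -> exists r, ~ Q r /\ forall q, Z q -> q r.

Let Z_prime q (Zq : Z q) : is_prime_ideal q := basic_prime HX (Z_X Zq).

Definition inter_decomp Qs := (forall Q, List.In Q Qs -> is_prime_ideal Q) /\
  forall r, bigcapI Z r <-> (forall Q, List.In Q Qs -> Q r).

Lemma inter_decomp_remove Qs Q r : inter_decomp Qs -> List.In Q Qs -> ~ Q r ->
  (forall q, Z q -> incl Q q -> q r) -> inter_decomp (List.remove classic_eq_dec Q Qs).
Proof.
move=> [Qs_prime HQs] inQ nQr Zr.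
split=> [Q' /(@List.in_remove _ (@classic_eq_dec (R -> Prop))) [inQ' _]|s]; first exact: Qs_prime.
split=> [Zs Q' /(@List.in_remove _ (@classic_eq_dec (R -> Prop))) [inQ' _]|Qs's].
  exact: (HQs s).1.
have Zrs : bigcapI Z (r * s).
  move=> q Zq; have [Q1 [inQ1 Q1q]] : exists Q1, List.In Q1 Qs /\ incl Q1 q.
    by apply: (prime_avoidance (Z_prime Zq) Qs_prime) => r' Qsr'; apply: (HQs r').2.
  have [eqQ1|neQ1] := classic (Q1 = Q).
    by rewrite eqQ1 in Q1q; exact: (idealMr (prime_ideal_ideal (Z_prime Zq)) _ (Zr q Zq Q1q)).
  apply: (idealMl (prime_ideal_ideal (Z_prime Zq))); apply: Q1q.
  by apply: Qs's; apply: List.in_in_remove.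
apply/HQs => Q' inQ'; have [->|neQ'] := classic (Q' = Q).
  by case: (prime_idealMP (Qs_prime Q inQ) ((HQs _).1 Zrs Q inQ)).
by apply: Qs's; apply: List.in_in_remove.
Qed.

(* In an irredundant decomposition each component is the intersection of the members of Z above
   it, hence lies in X (X is basic) and then in Z (Z is closed). *)
Lemma inter_decomp_minimal Qs : inter_decomp Qs ->
  (forall Q, List.In Q Qs -> forall r, (forall q, Z q -> incl Q q -> q r) -> Q r) ->
  forall P, Z P -> (forall q, Z q -> incl q P -> incl P q) -> List.In P Qs.
Proof.
move=> [Qs_prime HQs] irred P ZP P_min.
have [Q [inQ QP]] : exists Q, List.In Q Qs /\ incl Q P.
  by apply: (prime_avoidance (Z_prime ZP) Qs_prime) => r Qsr; apply: (HQs r).2.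
have Q_cap : bigcapI (fun q => Z q /\ incl Q q) = Q.
  apply: incl_antisym => [r Zr|r Qr q [_ Qq]]; last exact: Qq.
  by apply: irred => // q Zq Qq; apply: Zr.
have XQ : X Q.
  rewrite -Q_cap; case: HX => _; apply=> [q [Zq _]|]; first exact: Z_X.
  by rewrite Q_cap; apply: Qs_prime.
have ZQ : Z Q.
  apply: NNPP => nZQ; have [r [nQr Zr]] := Z_closed XQ nZQ.
  by apply: nQr; rewrite -Q_cap => q [Zq _]; apply: Zr.
by rewrite (incl_antisym (P_min Q ZQ QP) QP).
Qed.

Lemma closed_minimal_finite : noetherian R -> exists Qs,
  (forall Q, List.In Q Qs -> is_prime_ideal Q) /\
  forall P, Z P -> (forall q, Z q -> incl q P -> incl P q) -> List.In P Qs.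
Proof.
move=> HN; have [Qs0 HQs0] : exists Qs, inter_decomp Qs.
  apply: radical_finite_inter => //; first by apply: bigcapI_ideal => q /Z_prime [].
  exact: bigcapI_radical.
move: {2}(length Qs0) (leqnn (length Qs0)) => N; elim: N Qs0 HQs0 => [|N IHN] Qs decQs len_Qs.
  by case: Qs len_Qs decQs => // _ decQs; exists [::]; split=> // P; apply: inter_decomp_minimal.
have [[Q [inQ [r [Zr nQr]]]]|irred] := classic (exists Q, List.In Q Qs /\
    exists r, (forall q, Z q -> incl Q q -> q r) /\ ~ Q r).
  apply: IHN (inter_decomp_remove decQs inQ nQr Zr) _.
  by have /ltP := List.remove_length_lt classic_eq_dec _ _ inQ; lia.
exists Qs; split=> [|P]; first by case: decQs.
apply: inter_decomp_minimal => // Q inQ r Zr; apply: NNPP => nQr.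
by apply: irred; exists Q; split=> //; exists r.
Qed.

End ClosedSubsets.

(** * Choosing the coefficients *)

Section Chains.
Variables (R : comPzRingType) (X : (R -> Prop) -> Prop).

Lemma chain_in_le p l l' : (l' <= l)%N -> chain_in X p l -> chain_in X p l'.
Proof.
move=> le_l'l [q [q0 Xq q_lt]]; exists q; split=> // i le_il'.
  by apply: Xq; apply: leq_trans le_l'l.
by apply: q_lt; apply: leq_trans le_l'l.
Qed.

Lemma chain_in_cons p q l : X q -> incl q p -> (exists r, p r /\ ~ q r) ->
  chain_in X p l -> chain_in X q l.+1.
Proof.
move=> Xq qp [r [pr nqr]] [qs [q0 Xqs qs_lt]].
exists (fun i => if i is i'.+1 then qs i' else q); split=> // [[|i] le_il|[|i] lt_il] //.
- exact: Xqs.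
- by rewrite q0; split=> //; exists r.
- exact: qs_lt.
Qed.

End Chains.

Lemma pfree_basic_sumE (R : comPzRingType) (M : lmodType R) (E : (M -> R) -> Prop) p a m :
  is_prime_ideal p -> hom_submodule E ->
  pfree_basic_elt p (sumE E) ((a, m) : (R^o * M)%type) <-> ~ p a \/ exists g, E g /\ ~ p (g m).
Proof.
move=> Hp [_ E0 _ _]; have Ip := prime_ideal_ideal Hp.
split=> [[h [t [[c [g [Eg hE]]] nt [w [nw /eqP]]]]]|].
  rewrite mulr1 mul1r mulrBr subr_eq0 => /eqP hmt.
  have nh : ~ p (h (a, m)) by move=> ph; apply: (nprimeM Hp nw nt); rewrite -hmt; apply: idealMl.
  have [pa|] := classic (p a); [right | by left].
  exists g; split=> // pg; apply: nh; rewrite hE /=.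
  by apply: idealD => //; apply: idealMl.
case=> [na|[g [Eg ng]]].
  exists (fun rm => 1 * rm.1 + 0), a; split=> //; first by exists 1, (fun _ => 0).
  by exists 1; split; [apply: nprime1 | rewrite /= mul1r addr0 mulr1 subrr].
exists (fun rm => 0 * rm.1 + g rm.2), (g m); split=> //; first by exists 0, g.
by exists 1; split; [apply: nprime1 | rewrite /= mul0r add0r !mulr1 !mul1r subrr].
Qed.

Section Main.
Variables (R : comPzRingType) (M : lmodType R) (X : (R -> Prop) -> Prop) (E : (M -> R) -> Prop).
Variables (n : nat) (x : nat -> M) (a : R).
Hypotheses (HN : noetherian R) (HX : basic X) (HE : hom_submodule E) (lt1n : (1 < n)%N).
Hypothesis HS : Xfree_basic_set X E n x.
Hypothesis Hx1 : Xfree_basic_elt X (sumE E) ((a, x 1%N) : (R^o * M)%type).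

Local Notation x' := (shifted n x a).

Lemma unit_at_x1 p : X p -> ~ p a \/ exists g, E g /\ ~ p (g (x 1%N)).
Proof. by move=> Xp; apply/(pfree_basic_sumE _ _ (basic_prime HX Xp) HE); apply: Hx1. Qed.

(* j = 1 + dim_X p and delta_p(S) < j + 1: the only rank at which delta_p(S') >= j is not
   inherited from S. *)
Definition critical p j := [/\ (0 < j <= n.-1)%N, chain_in X p j.-1, ~ chain_in X p j &
  ~ delta_ge p E n x j.+1].

Lemma critical_uniq p j j' : critical p j -> critical p j' -> j = j'.
Proof.
move=> [_ chain_j nchain_j _] [_ chain_j' nchain_j' _].
have [lt_jj'|lt_j'j|//] := ltngtP j j'.
  by case: nchain_j; apply: (chain_in_le _ chain_j'); lia.
by case: nchain_j'; apply: (chain_in_le _ chain_j); lia.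
Qed.

Lemma pfree_basic_shifted p c : X p ->
  (forall j, critical p j -> delta_ge p E n.-1 (x' c) j) -> pfree_basic_set X p E n.-1 (x' c).
Proof.
move=> Xp crit_ok j le_jn chain_j; have Hp := basic_prime HX Xp.
have [->|j_gt0] := posnP j; first exact: delta_ge0.
have chain_j1 : chain_in X p j.-1 by case: chain_j => [j0|//]; move: j_gt0; rewrite j0.
have [chain_jj|nchain] := classic (chain_in X p j).
  apply: (delta_ge_shifted_pred a HE Hp); apply: (HS Xp); [lia | by right].
have [delta_j1|ndelta] := classic (delta_ge p E n x j.+1).
  exact: (delta_ge_shifted_pred a HE Hp delta_j1 c).
by apply: crit_ok; split=> //; lia.
Qed.

Lemma pfree_basic_shifted_congr p c c' : X p -> (forall i, p (c' i - c i)) ->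
  pfree_basic_set X p E n.-1 (x' c) -> pfree_basic_set X p E n.-1 (x' c').
Proof.
move=> Xp pc good_c j le_jn chain_j.
exact: (delta_ge_shifted_congr HE (basic_prime HX Xp) pc (good_c j le_jn chain_j)).
Qed.

Lemma pfree_basic_shifted_adjust p c t : X p -> ~ p t ->
  exists z, pfree_basic_set X p E n.-1 (x' (fun i => c i + t * z i)).
Proof.
move=> Xp nt; have Hp := basic_prime HX Xp.
have [[j crit_j]|ncrit] := classic (exists j, critical p j); last first.
  by exists (fun _ => 0); apply: pfree_basic_shifted => // j crit_j; case: ncrit; exists j.
have [j_range chain_j _ _] := crit_j.
have delta_j : delta_ge p E n x j by apply: (HS Xp); [lia | right].
have [|z Hz] := adjustable_local HE Hp lt1n _ delta_j (unit_at_x1 Xp) c nt; first lia.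
exists z; apply: pfree_basic_shifted => // j' crit_j'.
by rewrite (critical_uniq crit_j' crit_j).
Qed.

Lemma critical_minimal p j q : X p -> critical p j -> X q -> ~ delta_ge q E n x j.+1 ->
  incl q p -> incl p q.
Proof.
move=> Xp [j_range chain_j _ _] Xq ndelta qp r pr; apply: NNPP => nqr; apply: ndelta.
apply: (HS Xq); first lia.
have j_gt0 : (0 < j)%N by case/andP: j_range.
right; rewrite /= -(prednK j_gt0); apply: (chain_in_cons Xq qp _ chain_j).
by exists r.
Qed.

Lemma critical_primes_finite : exists L,
  (forall Q, List.In Q L -> is_prime_ideal Q) /\ forall p j, X p -> critical p j -> List.In p L.
Proof.
suff fin_lt N : exists L, (forall Q, List.In Q L -> is_prime_ideal Q) /\
    forall p j, (j < N)%N -> X p -> critical p j -> List.In p L.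
  have [L [L_prime HL]] := fin_lt n; exists L; split=> // p j Xp crit_j.
  by apply: (HL p j _ Xp crit_j); case: crit_j; lia.
elim: N => [|N [L [L_prime HL]]]; first by exists [::].
pose Z q := X q /\ ~ delta_ge q E n x N.+1.
have Z_closed Q : X Q -> ~ Z Q -> exists r, ~ Q r /\ forall q, Z q -> q r.
  move=> XQ nZQ; have delta_Q : delta_ge Q E n x N.+1 by apply: NNPP => nd; apply: nZQ.
  have [r [nQr Hr]] := delta_ge_open HE (basic_prime HX XQ) delta_Q.
  exists r; split=> // q [Xq nq]; apply: NNPP => nqr; apply: nq; exact: Hr (basic_prime HX Xq) nqr.
have [Qs [Qs_prime HQs]] := closed_minimal_finite HX (fun q => @proj1 _ _) Z_closed HN.
exists (L ++ Qs); split=> [Q /List.in_app_iff [] //|p j lt_jN Xp crit_j]; first exact: L_prime.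
  exact: Qs_prime.
apply/List.in_app_iff; have [lt_jN'|] := ltnP j N; first by left; apply: (HL p j lt_jN' Xp crit_j).
move=> le_Nj; have crit_N : critical p N by rewrite (_ : N = j) //; lia.
right; apply: HQs; first by split=> //; case: crit_N.
by move=> q [Xq nq] qp; apply: (critical_minimal Xp crit_N Xq nq qp).
Qed.

Lemma exists_pfree_basic_shifted : exists c, forall p, X p -> pfree_basic_set X p E n.-1 (x' c).
Proof.
have [L [L_prime HL]] := critical_primes_finite.
pose G p c := X p -> pfree_basic_set X p E n.-1 (x' c).
have G_congr p (_ : List.In p L) c c' : (forall i, p (c' i - c i)) -> G p c -> G p c'.
  by move=> pc good_c Xp; apply: pfree_basic_shifted_congr Xp pc (good_c Xp).
have G_adjust p (_ : List.In p L) c t : ~ p t -> exists z, G p (fun i => c i + t * z i).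
  move=> nt; have [Xp|nXp] := classic (X p); last by exists (fun _ => 0).
  by have [z Hz] := pfree_basic_shifted_adjust c Xp nt; exists z.
have [c Hc] := exists_common_solution L_prime G_congr G_adjust.
exists c => p Xp; have [[j crit_j]|ncrit] := classic (exists j, critical p j).
  exact: Hc (HL p j Xp crit_j) Xp.
by apply: pfree_basic_shifted => // j crit_j; case: ncrit; exists j.
Qed.

Lemma Xfree_basic_elt_shifted c : Xfree_basic_elt X (sumE E) ((a, x' c 1%N) : (R^o * M)%type).
Proof.
move=> p Xp; have Hp := basic_prime HX Xp; have Ip := prime_ideal_ideal Hp.
apply/(pfree_basic_sumE _ _ Hp HE); case: (unit_at_x1 Xp) => [|[g [Eg ng]]]; first by left.
have [pa|na] := classic (p a); last by left.
right; exists g; split=> //.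
rewrite /shifted /shift_weight eqxx addrC (hom_submodule_linear HE Eg) (idealDl Ip) //.
by rewrite -mulrA; apply: idealMr.
Qed.

End Main.

Unset Implicit Arguments.

Theorem lemma4p4 (R : comPzRingType) (M : lmodType R)
  (X : (R -> Prop) -> Prop) (E : (M -> R) -> Prop)
  (n : nat) (x : nat -> M) (a : R) :
  noetherian R -> fin_gen M -> basic X -> hom_submodule E -> (2 <= n)%N ->
  Xfree_basic_set X E n x ->
  Xfree_basic_elt X (sumE E) ((a, x 1%N) : (R^o * M)%type) ->
  exists c : nat -> R,
    let x' := fun i : nat =>
      if i == 1%N then x 1%N + (a * c 1%N) *: x n else x i + c i *: x n in
    Xfree_basic_set X E n.-1 x' /\
    Xfree_basic_elt X (sumE E) ((a, x' 1%N) : (R^o * M)%type).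
Proof.
move=> HN _ HX HE lt1n HS Hx1.
have [c Hc] := exists_pfree_basic_shifted HN HX HE lt1n HS Hx1.
exists c => /=.
have -> : (fun i => if i == 1%N then x 1%N + (a * c 1%N) *: x n else x i + c i *: x n) =
    shifted n x a c.
  apply: functional_extensionality => i; rewrite /shifted /shift_weight.
  by case: eqP => [->|_]; rewrite ?mul1r.
split; first by move=> p Xp; apply: Hc.
exact: Xfree_basic_elt_shifted.
Qed.
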